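(* With notation as in the context, the following hold. (1) Let $(x,h)\in\widehat{\mathsf{M}}\times\mathsf{2}^{\mathbb{N}\times\mathbb{F}}$ and $(a,k)\in\mathbb{N}^2$ with $a\ge k$ and $h(k,a,b)=\mathtt{0}$ for all $b\in\mathbb{N}$. Then $\sum_{i=a}^\infty r_{\mathsf{M}}(x,h)(i)\le 2^{-k}$. (2) The image of $e_{\mathsf{M}}$ equals $\bigcap_{m\in\mathbb{N}}C_m$. (3) For every $(x,h)\in\widehat{\mathsf{M}}\times\mathsf{2}^{\mathbb{N}\times\mathbb{F}}$ we have $r_{\mathsf{M}}(x,h)\in\mathsf{M}$. (4) For every $m\in\mathbb{N}$, the set $C_m$ is clopen in $\widehat{\mathsf{M}}\times\mathsf{2}^{\mathbb{N}\times\mathbb{F}}$.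
   Context: $M_i = \{ j\cdot 2^{-i} \mid j \in \{0,\dots,2^i\}\}$; $\widehat{\mathsf{M}}=\prod_i\mathsf{M}_i$ with each $\mathsf{M}_i$ discrete on $M_i$; $\mathsf{M}$ is the subspace of $\ell_1$ (real sequences with finite $1$-norm, metric $\|x-y\|_1$) with underlying set $\{x\in\prod_i M_i:\sum_i|x(i)|<\infty\}$. The countable fan $\mathbb{F}$ is $\mathbb{N}^2\cup\{(\infty,\infty)\}$ with metric $d((a,b),(\infty,\infty))=2^{-a}$, $d((a,b),(a',b'))=\max\{2^{-a},2^{-a'}\}$ for distinct points of $\mathbb{N}^2$. $\mathsf{2}=\{\mathtt{0},\mathtt{1}\}$ is discrete. Products and exponentials are formed in the category QCB (products: sequentialisation of product topology; $\mathsf{2}^{\mathbb{N}\times\mathbb{F}}$: continuous maps $\mathbb{N}\times\mathbb{F}\to\mathsf{2}$ with the sequentialisation of the compact-open topology). Define $f(x,k,a,b)=\mathtt{0}$ if $\sum_{i=a}^{a+b}x(i)\le 2^{-k}$, else $\mathtt{1}$ (for $x\in\widehat{\mathsf{M}}$, $k,a,b\in\mathbb{N}$); $g(y)(k,a,b)=f(y,k,a,b)$, $g(y)(k,\infty,\infty)=\mathtt{0}$ for $y\in\mathsf{M}$; $e_{\mathsf{M}}(x)=(x,g(x))$. For $m\in\mathbb{N}$ let $C_m$ be the set of $(x,h)\in\widehat{\mathsf{M}}\times\mathsf{2}^{\mathbb{N}\times\mathbb{F}}$ such that $h(k,\infty,\infty)=\mathtt{0}$ and $h(k,a,b)=f(x,k,a,b)$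 for all $k,a,b\le m$. Define $r_{\mathsf{M}}(x,h)\in\prod_i M_i$ by $r_{\mathsf{M}}(x,h)(m)=x(m)$ if $(x,h)\in C_m$ and $r_{\mathsf{M}}(x,h)(m)=0$ otherwise. *)

From HB Require Import structures.
From mathcomp Require Import all_boot all_order all_algebra.
From mathcomp Require Import all_classical all_reals all_analysis.
From mathcomp Require Import Rstruct Rstruct_topology.

Set Implicit Arguments.
Unset Strict Implicit.
Unset Printing Implicit Defensive.
Import Order.TTheory GRing.Theory Num.Theory.
Local Open Scope classical_set_scope.
Local Open Scope ring_scope.
Notation R := Rdefinitions.R.

(** Sequentialisation of a topology: open sets are the sequentially open ones. *)
Definition seq_open {T : topologicalType} (U : set T) : Prop :=
  forall (u : nat -> T) (x : T), u @ \oo --> x -> U x -> \forall n \near \oo, U (u n).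

Definition seqz (T : topologicalType) : Type := T.
HB.instance Definition _ (T : topologicalType) := Choice.on (seqz T).

Section Seqz.
Variable T : topologicalType.
Lemma seq_openT : @seq_open T setT.
Proof. by move=> u x _ _; apply: nearW. Qed.
Lemma seq_openI : setI_closed (@seq_open T).
Proof.
move=> A B oA oB u x ux [Ax Bx].
have := oA u x ux Ax; have := oB u x ux Bx.
by move=> hB hA; near=> n; split; [near: n; exact: hA| near: n; exact: hB].
Unshelve. all: by end_near.
Qed.
Lemma seq_open_bigU (I : Type) (f : I -> set T) :
  (forall i, seq_open (f i)) -> seq_open (\bigcup_i f i).
Proof.
move=> hof u x ux [i _ fxi]; have := hof i u x ux fxi.
by apply: filterS => n fin; exists i.
Qed.
End Seqz.

HB.instance Definition _ (T : topologicalType) :=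
  isOpenTopological.Build (seqz T) (@seq_openT T) (@seq_openI T) (@seq_open_bigU T).

(** * The countable fan F = N^2 ∪ {(∞,∞)} with its metric *)
Inductive Fpt : Type := Fpair of nat & nat | Finf.

Definition Fpt_enc (p : Fpt) : option (nat * nat) :=
  if p is Fpair a b then Some (a, b) else None.
Definition Fpt_dec (o : option (nat * nat)) : Fpt :=
  if o is Some (a, b) then Fpair a b else Finf.
Lemma Fpt_encK : cancel Fpt_enc Fpt_dec. Proof. by case. Qed.
HB.instance Definition _ := Countable.copy Fpt (can_type Fpt_encK).

Definition dF (p q : Fpt) : R :=
  match p, q with
  | Finf, Finf => 0
  | Fpair a _, Finf => 2 ^- a
  | Finf, Fpair a _ => 2 ^- a
  | Fpair a b, Fpair a' b' =>
      if (a == a') && (b == b') then 0 else Num.max (2 ^- a) (2 ^- a')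
  end.

Definition F_open (U : set Fpt) : Prop :=
  forall p, U p -> exists2 e : R, 0 < e & forall q, dF p q < e -> U q.

Lemma F_openT : F_open setT.
Proof. by move=> p _; exists 1 => //. Qed.
Lemma F_openI : setI_closed F_open.
Proof.
move=> A B oA oB p [Ap Bp].
have [e1 e10 h1] := oA p Ap; have [e2 e20 h2] := oB p Bp.
exists (Num.min e1 e2); first by rewrite lt_min e10 e20.
by move=> q; rewrite lt_min => /andP[q1 q2]; split; [exact: h1|exact: h2].
Qed.
Lemma F_open_bigU (I : Type) (f : I -> set Fpt) :
  (forall i, F_open (f i)) -> F_open (\bigcup_i f i).
Proof.
move=> hf p [i _ fip]; have [e e0 he] := hf i p fip.
by exists e => // q /he fq; exists i.
Qed.
HB.instance Definition _ := isOpenTopological.Build Fpt F_openT F_openI F_open_bigU.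

(** * The exponential 2^(N x F): continuous maps N x F -> 2 with the
    sequentialisation of the compact-open topology *)
Definition NF := (nat * Fpt)%type.
Definition CO := {compact-open, NF -> bool}.
Definition cont_set : set CO := [set h : CO | continuous (h : NF -> bool)].
Definition ExpNF := seqz (set_type cont_set).

Definition hfun (h : ExpNF) : nat -> Fpt -> bool :=
  fun k p => (set_val h : NF -> bool) (k, p).

Definition inMi (i : nat) (r : R) : bool :=
  [exists j : 'I_(2 ^ i).+1, r == (j%:R / 2 ^+ i)].
Definition Mi_car (i : nat) := {r : R | inMi i r}.
Definition Mi (i : nat) := discrete_topology (Mi_car i).
Definition hatM := prod_topology (fun i : nat => Mi i).

Definition Mval (x : hatM) (i : nat) : R := sval (x i).

Lemma inMi0 i : inMi i 0.
Proof.
apply/existsP; exists ord0; by rewrite /= mul0r.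
Qed.
Definition zeroM (i : nat) : Mi i := exist _ 0 (inMi0 i).

Definition inMl1 (x : hatM) : Prop :=
  (\sum_(0 <= i <oo) (`|Mval x i|)%:E < +oo)%E.

Definition QCB := seqz (hatM * ExpNF)%type.

Definition fM (x : hatM) (k a b : nat) : bool :=
  if \sum_(a <= i < a + b + 1) Mval x i <= 2 ^- k then false else true.

Definition gfun (y : hatM) : nat -> Fpt -> bool :=
  fun k p => match p with Fpair a b => fM y k a b | Finf => false end.

Definition Cset (m : nat) : set QCB :=
  [set z : QCB |
    (forall k, (k <= m)%N -> hfun z.2 k Finf = false) /\
    (forall k a b, (k <= m)%N -> (a <= m)%N -> (b <= m)%N ->
       hfun z.2 k (Fpair a b) = fM z.1 k a b)].

Definition rM (z : QCB) : hatM :=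
  fun m => if `[< Cset m z >] then z.1 m else zeroM m.

From HB Require Import structures.
From mathcomp Require Import all_boot all_order all_algebra.
From mathcomp Require Import all_classical all_reals all_analysis.
From mathcomp Require Import Rstruct Rstruct_topology.
Import Order.TTheory GRing.Theory Num.Theory.
Local Open Scope classical_set_scope.
Local Open Scope ring_scope.

(* Since the [C_m] decrease in [m], [r_M(x,h)] is [x] on an initial segment of
   indices and [0] beyond it.  On that segment every block sum from [a] is a
   value tested by [f], and [h] vanishes there, which gives (1).  Continuity of
   [h] at [(0,(oo,oo))] makes [h(0,a,b) = 0] for all large [a], so (1) bounds
   the tail of [r_M(x,h)] by [1], giving (3).  Finally [C_m] only inspects
   finitely many coordinates of [x] and finitely many values of [h], all of
   which are eventually constant along a convergent sequence, so [C_m] is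
   sequentially clopen, giving (4). *)

Lemma Mval_ge0 (x : hatM) i : 0 <= Mval x i.
Proof.
rewrite /Mval; case: (x i) => r /= /existsP [j /eqP ->].
by rewrite divr_ge0 // exprn_ge0.
Qed.

Lemma Mval_rM z m : Mval (rM z) m = if `[< Cset m z >] then Mval z.1 m else 0.
Proof. by rewrite /Mval /rM; case: ifP. Qed.

Lemma Cset_le m n z : (m <= n)%N -> Cset n z -> Cset m z.
Proof.
move=> mn [C1 C2]; split=> [k km|k a b km am bm].
  exact/C1/(leq_trans km).
by apply: C2; [apply: leq_trans km mn|apply: leq_trans am mn|apply: leq_trans bm mn].
Qed.

Lemma fM_false_sum_le x k a b :
  fM x k a b = false -> \sum_(a <= i < a + b + 1) Mval x i <= 2 ^- k.
Proof. by rewrite /fM; case: ifP. Qed.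

Section Tail.
Variables (z : QCB) (a k : nat).
Hypotheses (ka : (k <= a)%N) (h0 : forall b, hfun z.2 k (Fpair a b) = false).

Lemma rM_partial_sum_le n : \sum_(a <= i < n) Mval (rM z) i <= 2 ^- k.
Proof.
have pow_ge0 : 0 <= 2 ^- k :> R by rewrite invr_ge0 exprn_ge0.
elim: n => [|n IH]; first by rewrite big_geq.
have [an|na] := leqP a n; last by rewrite big_geq.
have [Cn|nCn] := asboolP (Cset n z); last first.
  by rewrite big_nat_recr //= Mval_rM; case: asboolP => // _; rewrite addr0.
have -> : \sum_(a <= i < n.+1) Mval (rM z) i =
          \sum_(a <= i < a + (n - a) + 1) Mval z.1 i.
  rewrite addn1 subnKC //; apply: eq_big_nat => i /andP[_ iSn].
  by rewrite Mval_rM asboolT //; apply: Cset_le Cn.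
apply: fM_false_sum_le; case: Cn => _ <-; rewrite ?leq_subr //.
exact: leq_trans an.
Qed.

Lemma rM_tail_le : (\sum_(a <= i <oo) (Mval (rM z) i)%:E <= (2 ^- k : R)%:E)%E.
Proof.
apply: lime_le.
  by apply: is_cvg_ereal_nneg_natsum => n _; rewrite lee_fin Mval_ge0.
by apply: nearW => n; rewrite sumEFin lee_fin; exact: rM_partial_sum_le.
Qed.

End Tail.

Lemma hfun_near_Finf (h : ExpNF) k :
  \forall a \near \oo, forall b, hfun h k (Fpair a b) = hfun h k Finf.
Proof.
have ch : continuous (set_val h : NF -> bool) by have := set_valP h.
have := ch (k, Finf) _ (discrete_set1 (set_val h (k, Finf))).
rewrite /= nbhs_simpl => -[[A B] /= [nA nB] sAB].
move: nB; rewrite nbhsE => -[U [oU UF] UB].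
have [e e0 he] := oU _ UF.
have := near_infty_natSinv_expn_lt (PosNum e0); apply: filterS => a ha b.
apply: (sAB (k, Fpair a b)); split; first exact: nbhs_singleton.
by apply/UB/he; rewrite /= -[_^-1]mul1r.
Qed.

Lemma rM_l1 z : inMl1 (rM z).
Proof.
rewrite /inMl1; case hF: (hfun z.2 0 Finf).
  (* [C_m] demands [h(0,(oo,oo)) = 0] for every [m], so [r_M(z)] vanishes. *)
  rewrite eseries0 // => i _ _; rewrite Mval_rM.
  by case: asboolP => [[C1 _]|_]; [rewrite C1 in hF|rewrite normr0].
have [N _ hN] := hfun_near_Finf z.2 0.
rewrite (@nneseries_split _ _ 0 N) ?add0n; last by move=> i _; rewrite lee_fin.
apply: lte_add_pinfty; first by rewrite sumEFin ltry.
apply: (@le_lt_trans _ _ (2 ^- 0 : R)%:E); last exact: ltry.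
rewrite (@eq_eseriesr _ _ (fun i => (Mval (rM z) i)%:E)); last first.
  by move=> i _; rewrite ger0_norm // Mval_ge0.
by apply: rM_tail_le => // b; rewrite hN /=.
Qed.

Lemma image_eMP z :
  (exists y : hatM, inMl1 y /\ z.1 = y /\ hfun z.2 = gfun y) <->
  (forall m, Cset m z).
Proof.
split=> [[y [_ [e1 e2]]] m|C].
  by split=> [k _|k a b _ _ _]; rewrite e2 // e1.
exists z.1; split; last split => //.
  have := rM_l1 z; rewrite /inMl1.
  by rewrite (@eq_eseriesr _ _ (fun i => (`|Mval z.1 i|)%:E)) // => i _;
    rewrite Mval_rM asboolT.
apply/funext => k; apply/funext => -[a b|]; last by have [C1 _] := C k; rewrite C1.
by have [_ C2] := C (maxn k (maxn a b)); apply: C2; rewrite !leq_max leqnn ?orbT.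
Qed.

Lemma cvg_seqz (T : topologicalType) (F : set_system T) (x : T) :
  Filter F -> F --> (x : seqz T) -> F --> x.
Proof.
move=> FF Fx V; rewrite nbhsE => -[U [oU Ux] UV].
apply: (filterS UV); apply: Fx; apply: open_nbhs_nbhs; split=> //.
by move=> u y uy Uy; apply: uy; exact: open_nbhs_nbhs.
Qed.

(* [fM x k a b] with [a, b <= m] reads [x] only up to index [a + b <= m + m]. *)
Definition agree_upto (m : nat) (y x : QCB) : Prop :=
  [/\ forall i, (i <= m + m)%N -> Mval y.1 i = Mval x.1 i,
      forall k, (k <= m)%N -> hfun y.2 k Finf = hfun x.2 k Finf &
      forall k a b, (k <= m)%N -> (a <= m)%N -> (b <= m)%N ->
        hfun y.2 k (Fpair a b) = hfun x.2 k (Fpair a b)].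

Lemma Cset_agree m y x : agree_upto m y x -> Cset m y <-> Cset m x.
Proof.
move=> [E1 E2 E3].
have fME k a b : (a <= m)%N -> (b <= m)%N -> fM y.1 k a b = fM x.1 k a b.
  move=> am bm; rewrite /fM (@eq_big_nat _ _ _ _ _ _ (fun i => Mval x.1 i)) //.
  move=> i /andP[_ ib]; apply: E1.
  by rewrite -ltnS (leq_trans ib) // addn1 ltnS leq_add.
split=> -[C1 C2]; split=> [k km|k a b km am bm].
- by rewrite -E2 // C1.
- by rewrite -E3 // C2 // fME.
- by rewrite E2 // C1.
- by rewrite E3 // C2 // fME.
Qed.

Section Convergence.
Variables (u : nat -> QCB) (x : QCB).
Hypothesis ux : u @ \oo --> (x : hatM * ExpNF).

Lemma cvg_Mval i : \forall n \near \oo, Mval (u n).1 i = Mval x.1 i.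
Proof.
have u1x : (fst \o u) @ \oo --> x.1 by apply: continuous_cvg => //; exact: cvg_fst.
have : (proj i \o (fst \o u)) @ \oo --> proj i x.1.
  by apply: continuous_cvg => //; exact: proj_continuous.
rewrite discrete_cvg; apply: (@filterS nat \oo) => n /= uxi.
by rewrite /Mval; congr sval; exact: uxi.
Qed.

Lemma cvg_hfun k p : \forall n \near \oo, hfun (u n).2 k p = hfun x.2 k p.
Proof.
have u2x : (snd \o u) @ \oo --> x.2 by apply: continuous_cvg => //; exact: cvg_snd.
have : (set_val \o (snd \o u)) @ \oo --> (set_val x.2 : CO).
  apply: continuous_cvg (@cvg_seqz (set_type cont_set) _ _ _ u2x).
  exact: initial_continuous.
move=> /(compact_open_cvgP _ (fmap_filter _ _)).1 /(_ [set (k, p)]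
  [set set_val x.2 (k, p)] (@compact_set1 _ (k, p)) (discrete_open _)).
have sub : set_val x.2 @` [set (k, p)] `<=` [set set_val x.2 (k, p)].
  by move=> _ [_ -> <-].
move=> /(_ sub); apply: (@filterS nat \oo) => n /= up.
by apply: up; exists (k, p).
Qed.

Lemma near_agree_upto m : \forall n \near \oo, agree_upto m (u n) x.
Proof.
have E1 : \forall n \near \oo, forall i : 'I_(m + m).+1, Mval (u n).1 i = Mval x.1 i.
  by apply: filter_forall => i; exact: cvg_Mval.
have E2 : \forall n \near \oo, forall k : 'I_m.+1, hfun (u n).2 k Finf = hfun x.2 k Finf.
  by apply: filter_forall => k; exact: cvg_hfun.
have E3 : \forall n \near \oo, forall t : 'I_m.+1 * 'I_m.+1 * 'I_m.+1,
    hfun (u n).2 t.1.1 (Fpair t.1.2 t.2) = hfun x.2 t.1.1 (Fpair t.1.2 t.2).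
  by apply: filter_forall => t; exact: cvg_hfun.
apply: filterS (filterI E1 (filterI E2 E3)) => n [e1 [e2 e3]].
split=> [i im|k km|k a b km am bm].
- exact: (e1 (@Ordinal (m + m).+1 i im)).
- exact: (e2 (@Ordinal m.+1 k km)).
- exact: (e3 (@Ordinal m.+1 k km, @Ordinal m.+1 a am, @Ordinal m.+1 b bm)).
Qed.

End Convergence.

Lemma Cset_clopen m : clopen (Cset m).
Proof.
split.
  by move=> u x ux Cx; apply: filterS (@near_agree_upto _ _ ux m) => n /Cset_agree ->.
rewrite -[Cset m]setCK closedC.
move=> u x ux nCx.
by apply: filterS (@near_agree_upto _ _ ux m) => n /Cset_agree /iffLR Cun /Cun.
Qed.

Theorem lemma3p4 :
  (* (1) *)
  (forall (z : QCB) (a k : nat), (k <= a)%N ->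
     (forall b : nat, hfun z.2 k (Fpair a b) = false) ->
     (\sum_(a <= i <oo) (Mval (rM z) i)%:E <= (2 ^- k : R)%:E)%E) /\
  (* (2) : image of e_M = \bigcap_m C_m *)
  (forall z : QCB,
     (exists y : hatM, inMl1 y /\ z.1 = y /\ hfun z.2 = gfun y) <->
     (forall m : nat, Cset m z)) /\
  (* (3) *)
  (forall z : QCB, inMl1 (rM z)) /\
  (* (4) *)
  (forall m : nat, clopen (Cset m)).
Proof.
split; first exact: rM_tail_le.
split; first exact: image_eMP.
split; first exact: rM_l1.
exact: Cset_clopen.
Qed.
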